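(* Let $\rho$ be an $i$-polymatroid on $E$ with $i$-dual $\rho^*$, and assume that for every $e\in E$: (1) $\rho(E-e)=\rho(E)$ (equivalently $\rho^*(e)=i$), and (2) $\rho^*(E-e)=\rho^*(E)$ (equivalently $\rho(e)=i$). Then for each positive integer $k$ the map $\phi:\Delta_\rho^k\to\Delta_{\rho^*}^k$ given by $\phi((M_1,\dots,M_k))=(M'_1,\dots,M'_k)$, where $M'_s=(M_s\backslash L_s)^*\oplus U_{0,L_s}$ and $L_s$ is the set of loops of $M_s$, is a bijection. Consequently $\chi(\rho;x)=\chi(\rho^*;x)$.
   Context: A polymatroid on $E$ is a function $\rho:2^E\to\mathbb{Z}$ that is normalized, non-decreasing and submodular; it is an $i$-polymatroid if $\rho(\{e\})\le i$ for all $e$. Its $i$-dual is $\rho^*(X)=i|X|-\rho(E)+\rho(E-X)$. $\Delta_\rho^k$ is the set of $k$-tuples $(N_1,\dots,N_k)$ of matroids on $E$ with $\rho=r_{N_1}+\cdots+r_{N_k}$. $U_{0,L}$ is the rank-$0$ matroid on $L$. The chromatic polynomial $\chi(\rho;x)$ is the polynomial whose value at each positive integer $k$ is $|\Delta_\rho^k|$. *)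

From HB Require Import structures.
From mathcomp Require Import all_boot all_order all_algebra.
Set Implicit Arguments. Unset Strict Implicit. Unset Printing Implicit Defensive.
Import Order.TTheory GRing.Theory Num.Theory.

Section Defs.
Variable E : finType.

Local Open Scope ring_scope.

Definition normalized (rho : {set E} -> int) : Prop := rho set0 = 0.
Definition nondecreasing (rho : {set E} -> int) : Prop :=
  forall X Y : {set E}, X \subset Y -> rho X <= rho Y.
Definition submodular (rho : {set E} -> int) : Prop :=
  forall X Y : {set E}, rho (X :|: Y) + rho (X :&: Y) <= rho X + rho Y.
Definition polymatroid (rho : {set E} -> int) : Prop :=
  [/\ normalized rho, nondecreasing rho & submodular rho].
Definition ipolymatroid (i : nat) (rho : {set E} -> int) : Prop :=
  polymatroid rho /\ forall e : E, rho [set e] <= i%:Z.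

Definition idual (i : nat) (rho : {set E} -> int) : {set E} -> int :=
  fun X => (i * #|X|)%N%:Z - rho setT + rho (~: X).

Local Close Scope ring_scope.

Definition is_matroid (I : {set {set E}}) : bool :=
  [&& set0 \in I,
      [forall A in I, forall B : {set E}, (B \subset A) ==> (B \in I)] &
      [forall A in I, forall B in I,
         (#|A| < #|B|) ==> [exists x in B :\: A, (x |: A) \in I]]].

Definition matroid := {I : {set {set E}} | is_matroid I}.

Definition indep (M : matroid) : {set {set E}} := val M.

Definition rk (M : matroid) (X : {set E}) : nat :=
  \max_(A in indep M | A \subset X) #|A|.

Definition loops (M : matroid) : {set E} := [set e | [set e] \notin indep M].

Definition del_indep (I : {set {set E}}) (L : {set E}) : {set {set E}} :=
  [set A in I | A \subset ~: L].

Definition bases (I : {set {set E}}) : {set {set E}} :=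
  [set B in I | [forall A in I, (B \subset A) ==> (A == B)]].

Definition dual_indep (S : {set E}) (I : {set {set E}}) : {set {set E}} :=
  [set A : {set E} | (A \subset S) && [exists B in bases I, [disjoint A & B]]].

(* U_{0,L}: rank-0 matroid on L; its only independent set is the empty set *)
Definition U0_indep (L : {set E}) : {set {set E}} := [set set0].

Definition dsum_indep (I1 I2 : {set {set E}}) : {set {set E}} :=
  [set A1 :|: A2 | A1 in I1, A2 in I2].

(* M' = (M \ L)^* (+) U_{0,L}, L = loops of M.  The result is a matroid,
   so the default value of insubd is never used. *)
Definition phi_comp (M : matroid) : matroid :=
  let L := loops M in
  insubd M (dsum_indep (dual_indep (~: L) (del_indep (indep M) L)) (U0_indep L)).

Local Open Scope ring_scope.
Definition Delta (rho : {set E} -> int) (k : nat) : {set {ffun 'I_k -> matroid}} :=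
  [set t : {ffun 'I_k -> matroid} |
     [forall X : {set E}, rho X == \sum_(s < k) ((rk (t s) X)%:Z)]].

Definition phi (k : nat) (t : {ffun 'I_k -> matroid}) : {ffun 'I_k -> matroid} :=
  [ffun s => phi_comp (t s)].

Definition is_chromatic_poly (rho : {set E} -> int) (p : {poly rat}) : Prop :=
  forall k : nat, (0 < k)%N -> p.[k%:R] = (#|Delta rho k|)%:R.
End Defs.

From mathcomp Require Import all_boot all_order all_algebra zify.
Import Order.TTheory GRing.Theory Num.Theory.
Set Implicit Arguments. Unset Strict Implicit. Unset Printing Implicit Defensive.

(* For a matroid [M] with loops [L], the matroid [M' = (M \ L)^* (+) U_{0,L}] has
   rank [r'(X) = |X - L| - r(E) + r(E - X)].  For [t] in [Delta^k_rho], [rho({e}) = i]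
   says that every [e] is a non-loop of exactly [i] components, so summing the
   formula over the components gives [rho^*].  If [M] has no coloops, [M'] has the
   same loops and [M'' = M]; condition (1) makes every component coloopless, so
   [phi] is an involution.  As [rho^{**} = rho] and the two conditions swap under
   duality, [phi] also maps [Delta^k_{rho^*}] back into [Delta^k_rho], so it is a
   bijection; equal counts at every [k > 0] force equal chromatic polynomials. *)

Section MatroidRank.
Variable E : finType.
Implicit Types (M : matroid E) (I : {set {set E}}) (A B K X Y : {set E}).

Lemma is_matroidP I : is_matroid I ->
  [/\ set0 \in I,
      forall A B, A \in I -> B \subset A -> B \in I &
      forall A B, A \in I -> B \in I -> #|A| < #|B| ->
        exists2 x, x \in B :\: A & x |: A \in I].
Proof.
case/and3P=> I0 /forallP sub /forallP aug; split=> // [A B AI BA | A B AI BI ltAB].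
  by have /implyP/(_ AI)/forallP/(_ B)/implyP := sub A; apply.
have /implyP/(_ AI)/forallP/(_ B)/implyP/(_ BI)/implyP/(_ ltAB) := aug A.
by case/existsP=> x /andP[]; exists x.
Qed.

Lemma indep0 M : set0 \in indep M.
Proof. by case: (is_matroidP (valP M)). Qed.

Lemma indep_sub M A B : A \in indep M -> B \subset A -> B \in indep M.
Proof. by case: (is_matroidP (valP M)) => _ sub _; apply: sub. Qed.

Lemma indep_aug M A B : A \in indep M -> B \in indep M -> #|A| < #|B| ->
  exists2 x, x \in B :\: A & x |: A \in indep M.
Proof. by case: (is_matroidP (valP M)) => _ _ aug; apply: aug. Qed.

Lemma indep_card_le_rk M A X : A \in indep M -> A \subset X -> #|A| <= rk M X.
Proof. by move=> AI AX; apply: (leq_bigmax_cond (P := fun A => _ && _)); rewrite AI. Qed.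

Lemma exists_max_indep M X : exists A, [/\ A \in indep M, A \subset X & #|A| = rk M X].
Proof.
have : 0 < #|[pred A | (A \in indep M) && (A \subset X)]|.
  by apply/card_gt0P; exists set0; rewrite inE indep0 sub0set.
by case/(eq_bigmax_cond (fun A => #|A|)) => A /andP[AI AX] eA; exists A; rewrite /rk eA.
Qed.

Lemma rkS M X Y : X \subset Y -> rk M X <= rk M Y.
Proof.
move=> XY; have [A [AI AX <-]] := exists_max_indep M X.
exact: indep_card_le_rk AI (subset_trans AX XY).
Qed.

Lemma rk_le_card M X : rk M X <= #|X|.
Proof. by have [A [_ AX <-]] := exists_max_indep M X; apply: subset_leq_card. Qed.

Lemma rk0 M : rk M set0 = 0.
Proof. by apply/eqP; rewrite -leqn0 -(cards0 E) rk_le_card. Qed.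

Lemma indep_extend_max M A X : A \in indep M -> A \subset X ->
  exists K, [/\ K \in indep M, A \subset K, K \subset X & #|K| = rk M X].
Proof.
move def_n : (rk M X - #|A|) => n; elim: n A def_n => [|n IH] A def_n AI AX.
  by exists A; split => //; have := indep_card_le_rk AI AX; lia.
have [B [BI BX eB]] := exists_max_indep M X.
have [|x /setDP[xB xA] xAI] := indep_aug AI BI; first lia.
have xAX : x |: A \subset X by rewrite subUset sub1set (subsetP BX) ?AX.
have [|K [KI xAK KX eK]] := IH (x |: A) _ xAI xAX; first by rewrite cardsU1 xA; lia.
by exists K; split => //; apply: subset_trans xAK; apply: subsetUr.
Qed.

Lemma indep_rk M A : (A \in indep M) = (rk M A == #|A|).
Proof.
apply/idP/eqP => [AI | eA].
  by have := indep_card_le_rk AI (subxx A); have := rk_le_card M A; lia.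
have [B [BI BA eB]] := exists_max_indep M A.
suff -> : A = B by [].
by apply/eqP; rewrite eq_sym eqEcard BA eB eA leqnn.
Qed.

Lemma eq_matroid_rk M1 M2 : rk M1 =1 rk M2 -> M1 = M2.
Proof.
by move=> eq_rk; apply: val_inj; apply/setP => A; rewrite -!/(indep _) !indep_rk eq_rk.
Qed.

Lemma rk_set1 M e : rk M [set e] = (e \notin loops M).
Proof.
rewrite inE negbK indep_rk cards1.
by have := rk_le_card M [set e]; rewrite cards1; case: (rk M _) => [|[]].
Qed.

Lemma indep_sub_loopsC M A : A \in indep M -> A \subset ~: loops M.
Proof.
move=> AI; apply/subsetP => x xA; rewrite !inE negbK.
by apply: indep_sub AI _; rewrite sub1set.
Qed.

Lemma basesE M B : (B \in bases (indep M)) = (B \in indep M) && (#|B| == rk M setT).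
Proof.
rewrite inE; case BI: (B \in indep M) => //=; apply/forallP/eqP => [maxB | eB A].
  have [K [KI BK _ eK]] := indep_extend_max BI (subsetT B).
  by have /implyP/(_ KI)/implyP/(_ BK)/eqP eKB := maxB K; rewrite -eKB.
apply/implyP => AI; apply/implyP => BA.
by rewrite eq_sym eqEcard BA eB indep_card_le_rk ?subsetT.
Qed.

End MatroidRank.

Lemma card_set1D (T : finType) (e : T) (L : {set T}) : #|[set e] :\: L| = (e \notin L : nat).
Proof.
case: (boolP (e \in L)) => eL /=; first by apply/eqP; rewrite cards_eq0 setD_eq0 sub1set.
by rewrite (setDidPl _) ?cards1 // disjoints_subset sub1set inE.
Qed.

Section LoopDeletedDual.
Variable E : finType.
Implicit Types (M : matroid E) (A B K X : {set E}).

Definition phi_indep M := dual_indep (~: loops M) (del_indep (indep M) (loops M)).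

Lemma del_indep_loops M : del_indep (indep M) (loops M) = indep M.
Proof.
apply/setP => A; rewrite inE andb_idr //; exact: indep_sub_loopsC.
Qed.

Lemma phi_indepP M A :
  (A \in phi_indep M) = (A \subset ~: loops M) && (rk M (~: A) == rk M setT).
Proof.
rewrite /phi_indep del_indep_loops inE; congr (_ && _); apply/existsP/eqP.
  case=> B /andP[]; rewrite basesE => /andP[BI /eqP eB] dAB.
  apply/eqP; rewrite eqn_leq rkS ?subsetT //= -eB indep_card_le_rk //.
  by rewrite subsetC -disjoints_subset.
move=> eA; have [B [BI BA eB]] := exists_max_indep M (~: A).
exists B; rewrite basesE BI eB eA eqxx /=.
by rewrite disjoint_sym disjoints_subset.
Qed.

Lemma phi_indep_setU1 M A K x : A \in phi_indep M -> x \notin loops M ->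
  K \in indep M -> K \subset ~: A -> #|K| = rk M setT -> x \notin K ->
  x |: A \in phi_indep M.
Proof.
rewrite !phi_indepP => /andP[AL _] xL KI KA eK xK.
rewrite subUset sub1set inE xL AL eqn_leq rkS ?subsetT //= -eK indep_card_le_rk //.
by rewrite setCU subsetI KA subsetC sub1set inE xK.
Qed.

(* If no element of [A' :\: A] augments [A], then every basis avoiding [A]
   contains [A' :\: A]; extending [B' :\: A] for a basis [B'] avoiding [A']
   to such a basis then forces [#|A'| <= #|A|]. *)
Lemma phi_indep_aug M A A' : A \in phi_indep M -> A' \in phi_indep M ->
  #|A| < #|A'| -> exists2 x, x \in A' :\: A & x |: A \in phi_indep M.
Proof.
move=> AD A'D ltAA'.
have A'L : A' \subset ~: loops M by move: A'D; rewrite phi_indepP => /andP[].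
have [/existsP[x /andP[xA'A xAD]] | no_aug] :=
  boolP [exists x in A' :\: A, x |: A \in phi_indep M]; first by exists x.
exfalso.
have {no_aug} A'A_sub K : K \in indep M -> K \subset ~: A -> #|K| = rk M setT ->
    A' :\: A \subset K.
  move=> KI KA eK; apply/subsetP => x xA'A; apply/negPn/negP => xK.
  have /setDP[/(subsetP A'L) + _] := xA'A; rewrite inE => xL.
  apply: (negP no_aug); apply/existsP; exists x.
  by rewrite xA'A (phi_indep_setU1 AD xL KI KA eK xK).
move: AD A'D; rewrite !phi_indepP => /andP[_ /eqP eA] /andP[_ /eqP eA'].
have [B' [B'I B'A' eB']] := exists_max_indep M (~: A').
have B'AI : B' :\: A \in indep M by apply: indep_sub B'I (subsetDl _ _).
have B'AA : B' :\: A \subset ~: A by rewrite setDE subsetIr.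
have [K [KI B'AK KA eK]] := indep_extend_max B'AI B'AA.
have A'AK := A'A_sub K KI KA (etrans eK eA).
have cardU : #|(A' :\: A) :|: (B' :\: A)| = #|A' :\: A| + #|B' :\: A|.
  apply/eqP; rewrite (leq_card_setU _ _).2.
  by apply: disjointW (subsetDl _ _) (subsetDl _ _) _; rewrite disjoint_sym disjoints_subset.
have cardK : #|(A' :\: A) :|: (B' :\: A)| <= #|K|.
  by apply: subset_leq_card; rewrite subUset A'AK B'AK.
rewrite cardU in cardK.
have B'A_le : #|B' :&: A| <= #|A :\: A'|.
  apply: subset_leq_card; apply/subsetP => x /setIP[xB' xA]; rewrite inE xA andbT.
  by have := subsetP B'A' x xB'; rewrite inE.
have cardA := cardsID A' A; have cardA' := cardsID A A'; rewrite setIC in cardA'.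
have cardB' := cardsID A B'.
lia.
Qed.

Lemma phi_indep_matroid M : is_matroid (phi_indep M).
Proof.
apply/and3P; split.
- by rewrite phi_indepP sub0set setC0 eqxx.
- apply/forall_inP => A; rewrite phi_indepP => /andP[AL /eqP eA].
  apply/forallP => B; apply/implyP => BA; rewrite phi_indepP (subset_trans BA AL).
  by rewrite eqn_leq rkS ?subsetT //= -eA rkS ?setCS.
- apply/forall_inP => A AD; apply/forall_inP => A' A'D; apply/implyP => ltAA'.
  have [x xA'A xAD] := phi_indep_aug AD A'D ltAA'.
  by apply/existsP; exists x; rewrite xA'A.
Qed.

Lemma dsum_indep_U0 (I : {set {set E}}) (L : {set E}) : dsum_indep I (U0_indep L) = I.
Proof.
apply/setP => A; apply/imset2P/idP => [[A1 A1I A2 /set1P -> ->] | AI].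
  by rewrite setU0.
by exists A set0; rewrite ?set11 ?setU0.
Qed.

Lemma indep_phi_comp M : indep (phi_comp M) = phi_indep M.
Proof. by rewrite /phi_comp /indep insubdK dsum_indep_U0 //; apply: phi_indep_matroid. Qed.

Lemma rk_phi_comp_le M X :
  rk (phi_comp M) X + rk M setT <= #|X :\: loops M| + rk M (~: X).
Proof.
have [A [AD AX <-]] := exists_max_indep (phi_comp M) X.
move: AD; rewrite indep_phi_comp phi_indepP => /andP[AL /eqP <-].
have [B [BI BA <-]] := exists_max_indep M (~: A).
have BXle : #|B :\: X| <= rk M (~: X).
  by apply: indep_card_le_rk (indep_sub BI (subsetDl _ _)) _; rewrite setDE subsetIr.
have ABXle : #|A :|: (B :&: X)| <= #|X :\: loops M|.
  apply: subset_leq_card; rewrite subUset setDE subsetI AX AL setIC.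
  by apply/setIS/indep_sub_loopsC.
have ABX : #|A :|: (B :&: X)| = #|A| + #|B :&: X|.
  apply/eqP; rewrite (leq_card_setU _ _).2.
  by apply: disjointWr (subsetIl _ _) _; rewrite disjoint_sym disjoints_subset.
by rewrite -(cardsID X B) addnA -ABX leq_add.
Qed.

Lemma rk_phi_comp_ge M X :
  #|X :\: loops M| + rk M (~: X) <= rk (phi_comp M) X + rk M setT.
Proof.
have [J [JI JX <-]] := exists_max_indep M (~: X).
have [K [KI JK _ eK]] := indep_extend_max JI (subsetT J).
have AD : (X :\: loops M) :\: K \in indep (phi_comp M).
  rewrite indep_phi_comp phi_indepP; apply/andP; split.
    by apply/subsetP => x /setDP[/setDP[_ xL] _]; rewrite inE.
  by rewrite eqn_leq rkS ?subsetT //= -eK indep_card_le_rk // subsetC setDE subsetIr.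
have Ale := indep_card_le_rk AD (subset_trans (subsetDl _ _) (subsetDl _ _)).
have XLK : #|(X :\: loops M) :&: K| <= #|K :&: X|.
  by rewrite setIC; apply/subset_leq_card/setIS/subsetDl.
have JKX : #|J| <= #|K :\: X|.
  by apply/subset_leq_card; rewrite setDE subsetI JK JX.
have := cardsID K (X :\: loops M); have := cardsID X K; lia.
Qed.

Lemma rk_phi_comp M X :
  rk (phi_comp M) X + rk M setT = #|X :\: loops M| + rk M (~: X).
Proof. by apply/eqP; rewrite eqn_leq rk_phi_comp_le rk_phi_comp_ge. Qed.

Definition coloopless M := forall e, rk M (setT :\ e) = rk M setT.

Lemma loops_phi_comp M : coloopless M -> loops (phi_comp M) = loops M.
Proof.
move=> colM; apply/setP => e; apply/negb_inj/eqP.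
have := rk_phi_comp M [set e].
rewrite -setTD (colM e) rk_set1 card_set1D => /addIn.
by case: (_ \notin _); case: (_ \notin _).
Qed.

(* Apply the rank formula to [M'] and to [M]: the [|E - L|] and [r(E)] terms cancel. *)
Lemma phi_compK M : coloopless M -> phi_comp (phi_comp M) = M.
Proof.
move=> colM; apply: eq_matroid_rk => X.
have := rk_phi_comp (phi_comp M) X; rewrite loops_phi_comp //.
have := rk_phi_comp M setT; rewrite setCT rk0 addn0 setTD.
have := rk_phi_comp M (~: X); rewrite setCK.
have := cardsID X (~: loops M).
rewrite setIC -setDE [~: _ :\: X]setDE setIC -setDE.
lia.
Qed.

End LoopDeletedDual.

Section MatroidSums.
Variables (E : finType) (k : nat).
Implicit Types (sigma : {set E} -> int) (t : {ffun 'I_k -> matroid E}).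

Lemma DeltaP sigma t :
  reflect (forall X, sigma X = Posz (\sum_(s < k) rk (t s) X)) (t \in Delta sigma k).
Proof.
have sumz X : Posz (\sum_(s < k) rk (t s) X) = (\sum_(s < k) Posz (rk (t s) X))%R.
  exact: (big_morph Posz PoszD).
by rewrite inE; apply: (iffP forallP) => sigmaE X;
  [rewrite sumz; apply/eqP | rewrite sigmaE sumz].
Qed.

Lemma eq_Delta sigma tau : sigma =1 tau -> Delta sigma k = Delta tau k.
Proof.
by move=> eq_st; apply/setP => t; rewrite !inE; apply: eq_forallb => X; rewrite eq_st.
Qed.

Lemma card_setD_loops (M : matroid E) X : #|X :\: loops M| = \sum_(e in X) rk M [set e].
Proof.
rewrite -sum1_card [LHS]big_mkcond [RHS]big_mkcond; apply: eq_bigr => e _.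
by rewrite rk_set1 in_setD andbC; case: (e \in X); case: (e \in loops M).
Qed.

Lemma Delta_coloopless sigma t : (forall e, sigma (setT :\ e) = sigma setT) ->
  t \in Delta sigma k -> forall s, coloopless (t s).
Proof.
move=> sigmaC /DeltaP tD s e; apply/eqP; rewrite eqn_leq rkS ?subsetT //=.
have rk_le s' : rk (t s') (setT :\ e) <= rk (t s') setT by apply/rkS/subsetT.
have := sigmaC e; rewrite !tD => -[eq_sum].
have /eqP : \sum_(s' < k) (rk (t s') setT - rk (t s') (setT :\ e)) = 0.
  by rewrite sumnB // eq_sum subnn.
by rewrite sum_nat_eq0 => /forallP/(_ s); rewrite subn_eq0.
Qed.

Lemma sum_card_setD_loops sigma (i : nat) t X : (forall e, sigma [set e] = Posz i) ->
  t \in Delta sigma k -> \sum_(s < k) #|X :\: loops (t s)| = (i * #|X|)%N.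
Proof.
move=> sigma1 /DeltaP tD; under eq_bigr do rewrite card_setD_loops.
rewrite exchange_big /= mulnC -sum_nat_const; apply: eq_bigr => e _.
by have := sigma1 e; rewrite tD => -[].
Qed.

Lemma phi_Delta_idual sigma (i : nat) t : (forall e, sigma [set e] = Posz i) ->
  t \in Delta sigma k -> phi t \in Delta (idual i sigma) k.
Proof.
move=> sigma1 tD; have /DeltaP sigmaE := tD; apply/DeltaP => X.
have := sum_card_setD_loops X sigma1 tD.
have : (\sum_(s < k) rk (phi t s) X + \sum_(s < k) rk (t s) setT =
        \sum_(s < k) #|X :\: loops (t s)| + \sum_(s < k) rk (t s) (~: X))%N.
  by rewrite -!big_split; apply: eq_bigr => s _; rewrite ffunE; apply: rk_phi_comp.
rewrite /idual !sigmaE; lia.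
Qed.

Lemma phiK sigma : (forall e, sigma (setT :\ e) = sigma setT) ->
  {in Delta sigma k, cancel (@phi E k) (@phi E k)}.
Proof.
move=> sigmaC t tD; apply/ffunP => s.
by rewrite !ffunE phi_compK //; apply: Delta_coloopless sigmaC tD s.
Qed.

End MatroidSums.

Local Open Scope ring_scope.

Lemma idualK (E : finType) (i : nat) (rho : {set E} -> int) :
  normalized rho -> idual i (idual i rho) =1 rho.
Proof.
move=> rho0 X; rewrite /idual setCK setCT rho0.
have : (i * #|[set: E]| = i * #|X| + i * #|~: X|)%N by rewrite -mulnDr cardsC cardsT.
lia.
Qed.

Lemma idual_set1 (E : finType) (i : nat) (rho : {set E} -> int) (e : E) :
  rho (setT :\ e) = rho setT -> idual i rho [set e] = i%:Z.
Proof. by move=> rhoC; rewrite /idual -setTD rhoC cards1 muln1 subrK. Qed.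

Lemma poly_eq_at_pos_nat (R : numDomainType) (p q : {poly R}) :
  (forall k : nat, (0 < k)%N -> p.[k%:R] = q.[k%:R]) -> p = q.
Proof.
move=> pq; apply/eqP; rewrite -subr_eq0; apply/eqP.
apply: (@roots_geq_poly_eq0 _ _ [seq j.+1%:R | j <- iota 0 (size (p - q))]).
- by apply/allP => _ /mapP[j _ ->]; rewrite /root !hornerE pq // subrr.
- by rewrite map_inj_uniq ?iota_uniq // => m n /eqP; rewrite eqr_nat => /eqP[].
- by rewrite size_map size_iota.
Qed.

Theorem corollary4p3 (E : finType) (i : nat) (rho : {set E} -> int) :
  ipolymatroid i rho ->
  (forall e : E, rho (setT :\ e) = rho setT) ->
  (forall e : E, idual i rho (setT :\ e) = idual i rho setT) ->
  (forall k : nat, (0 < k)%N ->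
     {in Delta rho k, forall t, phi t \in Delta (idual i rho) k} /\
     {in Delta rho k &, injective (@phi E k)} /\
     {subset Delta (idual i rho) k <= [set phi t | t in Delta rho k]}) /\
  (forall p q : {poly rat},
     is_chromatic_poly rho p -> is_chromatic_poly (idual i rho) q -> p = q).
Proof.
move=> [[rho0 _ _] _] rhoC rhoDC.
have rho1 e : rho [set e] = i by rewrite -(idualK i rho0) idual_set1.
have phi_Delta k : {in Delta rho k, forall t, phi t \in Delta (idual i rho) k}.
  by move=> t; apply: phi_Delta_idual rho1.
have phi_inj k : {in Delta rho k &, injective (@phi E k)} := can_in_inj (phiK rhoC).
have DeltaD k : Delta (idual i rho) k = [set phi t | t in Delta rho k].
  apply/setP => t; apply/idP/imsetP => [tD | [t0 t0D ->]]; last exact: phi_Delta.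
  exists (phi t); last by rewrite (phiK rhoDC).
  by rewrite -(eq_Delta k (idualK i rho0)); apply: phi_Delta_idual tD => e; apply: idual_set1.
split=> [k _ | p q pchi qchi].
  by do !split; [apply: phi_Delta | apply: phi_inj | rewrite DeltaD].
apply: poly_eq_at_pos_nat => k k0.
by rewrite pchi // qchi // DeltaD card_in_imset //; apply: phi_inj.
Qed.
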